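(* Let $m,n\in\mathbb{N}$ and let $s_{j,\ell}\in\mathbb{C}$ with $\Re(s_{j,\ell})>0$ for $1\le j\le n$, $1\le\ell\le m$. Then the $n\times n$ matrix \[ \left(\prod_{\ell=1}^{m}\left(1-2^{1-s_{j,\ell}-\overline{s_{k,\ell}}}\right)\Gamma(s_{j,\ell}+\overline{s_{k,\ell}})\zeta(s_{j,\ell}+\overline{s_{k,\ell}})\right)_{j,k=1}^{n} \] is positive semidefinite.
   Context: $\Gamma$ is Euler's Gamma function and $\zeta$ the Riemann zeta function; the product $(1-2^{1-s})\zeta(s)$ is understood as the entire function it defines (the singularity at $s=1$ is removable). A complex matrix $A=(a_{j,k})$ is positive semidefinite if $\sum_{j,k}a_{j,k}z_j\overline{z_k}\ge0$ for all complex $z_j$. *)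

From Stdlib Require Import Reals.
From Coquelicot Require Import Coquelicot.
Open Scope R_scope.

(* x^s for a real base x > 0 and complex exponent s: exp(s * ln x). *)
Definition cpow_pos (x : R) (s : C) : C :=
  (exp (Re s * ln x) * cos (Im s * ln x), exp (Re s * ln x) * sin (Im s * ln x)).

Definition cGamma (s : C) : C :=
  (RInt_gen (fun t => Re (cpow_pos t (Cminus s (RtoC 1))) * exp (- t))
            (at_right 0) (Rbar_locally p_infty),
   RInt_gen (fun t => Im (cpow_pos t (Cminus s (RtoC 1))) * exp (- t))
            (at_right 0) (Rbar_locally p_infty)).

(* The entire function (1 - 2^(1-s)) zeta(s), on Re s > 0, given by the
   (convergent) alternating Dirichlet series  sum_{k>=1} (-1)^(k-1) k^(-s). *)
Definition eta_zeta (s : C) : C :=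
  (Series (fun k => (-1) ^ k * Re (cpow_pos (INR (k + 1)) (Copp s))),
   Series (fun k => (-1) ^ k * Im (cpow_pos (INR (k + 1)) (Copp s)))).

Fixpoint sumC (n : nat) (f : nat -> C) : C :=
  match n with O => RtoC 0 | S p => Cplus (sumC p f) (f p) end.
Fixpoint prodC (n : nat) (f : nat -> C) : C :=
  match n with O => RtoC 1 | S p => Cmult (prodC p f) (f p) end.

Definition psd (n : nat) (A : nat -> nat -> C) : Prop :=
  forall z : nat -> C,
    let q := sumC n (fun j => sumC n (fun k => Cmult (Cmult (A j k) (z j)) (Cconj (z k)))) in
    Im q = 0 /\ 0 <= Re q.

(* For Re w > 0 and 0 < a < b, rescaling the Gamma integral gives
     (a^-w - b^-w) Gamma(w) = int_0^oo (e^(-a y) - e^(-b y)) y^(w-1) dy.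
   For w = s_j + conj(s_k) the integrand is the nonnegative weight (e^(-a y) - e^(-b y)) / y
   times the rank-one kernel y^(s_j) conj(y^(s_k)), so the Schur product of a psd matrix with
   this kernel is an integral of psd matrices, hence psd.  Grouping the alternating series
   sum_k (-1)^k (k+1)^-w = (1 - 2^(1-w)) zeta(w) into pairs (a, b) = (2i+1, 2i+2) exhibits
   (1 - 2^(1-w)) zeta(w) Gamma(w) as a limit of sums of such kernels.  Sums and limits of psd
   matrices are psd, so each factor of the product preserves positivity under the Schur
   product, and induction on m starting from the all-ones matrix proves the theorem. *)

From Stdlib Require Import Reals Lra Lia.
From Coquelicot Require Import Coquelicot.
Open Scope R_scope.

Ltac C_ring := apply injective_projections; simpl; try ring.

Lemma exp_le_compat x y : x <= y -> exp x <= exp y.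
Proof. intros [Hxy|<-]; [left; apply exp_increasing, Hxy | right; reflexivity]. Qed.

Lemma Rpower_pos x a : 0 < Rpower x a.
Proof. apply exp_pos. Qed.

Lemma Rpower_le_Rpower_neg a b p : 0 < a <= b -> p <= 0 -> Rpower b p <= Rpower a p.
Proof.
  intros Hab Hp. unfold Rpower. apply exp_le_compat.
  assert (ln a <= ln b) by (destruct (proj2 Hab) as [Hlt| ->]; [left; apply ln_increasing; lra | lra]).
  nra.
Qed.

Lemma Rpower_minus_1 x p : 0 < x -> Rpower x (p - 1) = exp (p * ln x) / x.
Proof.
  intros Hx. unfold Rpower, Rminus. rewrite Rmult_plus_distr_r, exp_plus.
  replace (- (1) * ln x) with (- ln x) by ring. rewrite exp_Ropp, exp_ln by assumption. reflexivity.
Qed.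

Lemma is_derive_Rpower t a : 0 < t -> is_derive (fun x => Rpower x a) t (a * Rpower t (a - 1)).
Proof. intros Ht. apply is_derive_Reals, derivable_pt_lim_power, Ht. Qed.

Lemma continuous_Rpower t a : 0 < t -> continuous (fun x => Rpower x a) t.
Proof.
  intros Ht. apply (ex_derive_continuous (K := R_AbsRing) (V := R_NormedModule)).
  eexists. apply is_derive_Rpower, Ht.
Qed.

Lemma exists_Rpower_le p eps : 0 < p -> 0 < eps -> exists d, 0 < d <= 1 /\ Rpower d p <= eps.
Proof.
  intros Hp He. exists (Rmin 1 (Rpower eps (/ p))). split.
  - split; [apply Rmin_glb_lt; [lra | apply Rpower_pos] | apply Rmin_l].
  - assert (Heps : Rpower (Rpower eps (/ p)) p = eps)
      by (rewrite Rpower_mult, Rinv_l, Rpower_1; lra).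
    rewrite <- Heps at 2. apply Rle_Rpower_l; [lra|].
    split; [apply Rmin_glb_lt; [lra | apply Rpower_pos] | apply Rmin_r].
Qed.

Lemma exists_exp_le c eps : 0 <= c -> 0 < eps -> exists M, 1 <= M /\ c * exp (- M / 2) <= eps.
Proof.
  intros Hc He. set (e := eps / (c + 1)).
  assert (He' : 0 < e) by (apply Rdiv_lt_0_compat; lra).
  exists (Rmax 1 (- 2 * ln e)). split; [apply Rmax_l|].
  assert (Hexp : exp (- Rmax 1 (- 2 * ln e) / 2) <= e).
  { rewrite <- (exp_ln e) at 2 by assumption. apply exp_le_compat.
    assert (- 2 * ln e <= Rmax 1 (- 2 * ln e)) by apply Rmax_r. lra. }
  apply Rle_trans with (c * e); [apply Rmult_le_compat_l; assumption|].
  unfold e. apply (Rmult_le_reg_r (c + 1)); [lra|].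
  unfold Rdiv. rewrite !Rmult_assoc, Rinv_l by lra. nra.
Qed.

(** * Finite sums and positive semidefinite matrices *)

Lemma sumC_ext n (f g : nat -> C) :
  (forall i, (i < n)%nat -> f i = g i) -> sumC n f = sumC n g.
Proof.
  induction n as [|n IH]; intros Hfg; simpl; [reflexivity|].
  rewrite IH by (intros; apply Hfg; lia). rewrite Hfg by lia. reflexivity.
Qed.

Lemma sumC_plus n (f g : nat -> C) :
  sumC n (fun i => Cplus (f i) (g i)) = Cplus (sumC n f) (sumC n g).
Proof. induction n as [|n IH]; simpl; [C_ring|]. rewrite IH. C_ring. Qed.

Lemma sumC_mult_l n c (f : nat -> C) :
  sumC n (fun i => Cmult c (f i)) = Cmult c (sumC n f).
Proof. induction n as [|n IH]; simpl; [C_ring|]. rewrite IH. C_ring. Qed.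

Lemma sumC_mult_r n c (f : nat -> C) :
  sumC n (fun i => Cmult (f i) c) = Cmult (sumC n f) c.
Proof. induction n as [|n IH]; simpl; [C_ring|]. rewrite IH. C_ring. Qed.

Lemma Cconj_sumC n (f : nat -> C) : Cconj (sumC n f) = sumC n (fun i => Cconj (f i)).
Proof. induction n as [|n IH]; simpl; [C_ring|]. rewrite <- IH. C_ring. Qed.

Lemma Re_sumC n (f : nat -> C) : Re (sumC (S n) f) = sum_n (fun i => Re (f i)) n.
Proof.
  induction n as [|n IH]; [rewrite sum_O; apply Rplus_0_l|].
  rewrite sum_Sn, <- IH. reflexivity.
Qed.

Lemma Im_sumC n (f : nat -> C) : Im (sumC (S n) f) = sum_n (fun i => Im (f i)) n.
Proof.
  induction n as [|n IH]; [rewrite sum_O; apply Rplus_0_l|].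
  rewrite sum_Sn, <- IH. reflexivity.
Qed.

Definition qform n (A : nat -> nat -> C) (z : nat -> C) : C :=
  sumC n (fun j => sumC n (fun k => Cmult (Cmult (A j k) (z j)) (Cconj (z k)))).

Lemma psd_qform n A :
  psd n A <-> forall z, Im (qform n A z) = 0 /\ 0 <= Re (qform n A z).
Proof. split; auto. Qed.

Lemma qform_ext n A B z :
  (forall j k, (j < n)%nat -> (k < n)%nat -> A j k = B j k) -> qform n A z = qform n B z.
Proof.
  intros HAB. apply sumC_ext; intros j Hj. apply sumC_ext; intros k Hk. rewrite HAB; auto.
Qed.

Lemma psd_ext n A B :
  (forall j k, (j < n)%nat -> (k < n)%nat -> A j k = B j k) -> psd n A -> psd n B.
Proof. rewrite !psd_qform. intros HAB HA z. rewrite <- (qform_ext n A B z HAB). apply HA. Qed.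

Lemma qform_plus n A B z :
  qform n (fun j k => Cplus (A j k) (B j k)) z = Cplus (qform n A z) (qform n B z).
Proof.
  unfold qform. rewrite <- sumC_plus. apply sumC_ext; intros j _.
  rewrite <- sumC_plus. apply sumC_ext; intros k _. C_ring.
Qed.

Lemma psd_plus n A B : psd n A -> psd n B -> psd n (fun j k => Cplus (A j k) (B j k)).
Proof.
  rewrite !psd_qform. intros HA HB z. rewrite qform_plus.
  destruct (HA z), (HB z). destruct (qform n A z), (qform n B z). simpl in *. lra.
Qed.

Lemma psd_1 n : psd n (fun _ _ => RtoC 1).
Proof.
  rewrite psd_qform. intros z.
  replace (qform n (fun _ _ => RtoC 1) z) with (Cmult (sumC n z) (Cconj (sumC n z))).
  - destruct (sumC n z) as [a b]. simpl. split; [ring | nra].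
  - unfold qform. rewrite <- sumC_mult_r. apply sumC_ext; intros j _.
    rewrite Cconj_sumC, <- sumC_mult_l. apply sumC_ext; intros k _. C_ring.
Qed.

(* The quadratic form of the Schur product at [z] is that of [A] at [(v_j z_j)_j]. *)
Lemma psd_mult_rank1 n A (v : nat -> C) :
  psd n A -> psd n (fun j k => Cmult (A j k) (Cmult (v j) (Cconj (v k)))).
Proof.
  rewrite !psd_qform. intros HA z.
  replace (qform n _ z) with (qform n A (fun j => Cmult (v j) (z j))); [apply HA|].
  apply sumC_ext; intros j _. apply sumC_ext; intros k _. C_ring.
Qed.

Lemma psd_scal n c A : 0 <= c -> psd n A -> psd n (fun j k => Cmult (RtoC c) (A j k)).
Proof.
  rewrite !psd_qform. intros Hc HA z.
  replace (qform n _ z) with (Cmult (RtoC c) (qform n A z)).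
  - destruct (HA z) as [HIm HRe]. destruct (qform n A z) as [p q]. simpl in *.
    split; [rewrite HIm; ring | nra].
  - unfold qform. rewrite <- sumC_mult_l. apply sumC_ext; intros j _.
    rewrite <- sumC_mult_l. apply sumC_ext; intros k _. C_ring.
Qed.

Lemma psd_0 n : psd n (fun _ _ => RtoC 0).
Proof.
  apply (psd_ext n (fun _ _ => Cmult (RtoC 0) (RtoC 1))); [intros; C_ring|].
  apply psd_scal, psd_1. lra.
Qed.

Lemma psd_sum n N (A : nat -> nat -> nat -> C) :
  (forall i, (i < N)%nat -> psd n (A i)) -> psd n (fun j k => sumC N (fun i => A i j k)).
Proof.
  induction N as [|N IH]; intros HA; simpl; [apply psd_0|].
  apply psd_plus; [apply IH; intros|]; apply HA; lia.
Qed.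

Lemma cpow_pos_Cplus x a b : cpow_pos x (Cplus a b) = Cmult (cpow_pos x a) (cpow_pos x b).
Proof.
  unfold cpow_pos, Cmult, Cplus, Re, Im; simpl.
  rewrite !Rmult_plus_distr_r, exp_plus, cos_plus, sin_plus. f_equal; ring.
Qed.

Lemma cpow_pos_mult x y s :
  0 < x -> 0 < y -> cpow_pos (x * y) s = Cmult (cpow_pos x s) (cpow_pos y s).
Proof.
  intros Hx Hy. unfold cpow_pos, Cmult, Re, Im; simpl.
  rewrite ln_mult, !Rmult_plus_distr_l, exp_plus, cos_plus, sin_plus by assumption. f_equal; ring.
Qed.

Lemma cpow_pos_Cconj x s : cpow_pos x (Cconj s) = Cconj (cpow_pos x s).
Proof.
  unfold cpow_pos, Cconj, Re, Im; simpl.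
  rewrite Ropp_mult_distr_l_reverse, cos_neg, sin_neg. f_equal; ring.
Qed.

Lemma cpow_pos_RtoC x r : cpow_pos x (RtoC r) = RtoC (Rpower x r).
Proof. unfold cpow_pos, RtoC, Re, Im, Rpower; simpl. rewrite Rmult_0_l, cos_0, sin_0. f_equal; ring. Qed.

Lemma cpow_pos_Copp_l x s : Cmult (cpow_pos x (Copp s)) (cpow_pos x s) = RtoC 1.
Proof.
  rewrite <- cpow_pos_Cplus.
  replace (Cplus (Copp s) s) with (RtoC 0) by C_ring.
  rewrite cpow_pos_RtoC. unfold Rpower. rewrite Rmult_0_l, exp_0. reflexivity.
Qed.

Lemma cpow_pos_Cminus_1 y w :
  0 < y -> cpow_pos y (Cminus w (RtoC 1)) = Cmult (RtoC (/ y)) (cpow_pos y w).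
Proof.
  intros Hy. unfold Cminus. rewrite cpow_pos_Cplus.
  replace (Copp (RtoC 1)) with (RtoC (-1)) by C_ring.
  rewrite cpow_pos_RtoC. unfold Rpower.
  replace (-1 * ln y) with (- ln y) by ring. rewrite exp_Ropp, exp_ln by assumption. C_ring.
Qed.

Lemma Re_cpow_pos_le x s : Rabs (Re (cpow_pos x s)) <= Rpower x (Re s).
Proof.
  unfold cpow_pos, Re, Rpower; simpl. rewrite Rabs_mult, Rabs_pos_eq by (left; apply exp_pos).
  rewrite <- (Rmult_1_r (exp _)) at 2. apply Rmult_le_compat_l; [left; apply exp_pos|].
  apply Rabs_le, COS_bound.
Qed.

Lemma Im_cpow_pos_le x s : Rabs (Im (cpow_pos x s)) <= Rpower x (Re s).
Proof.
  unfold cpow_pos, Im, Re, Rpower; simpl. rewrite Rabs_mult, Rabs_pos_eq by (left; apply exp_pos).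
  rewrite <- (Rmult_1_r (exp _)) at 2. apply Rmult_le_compat_l; [left; apply exp_pos|].
  apply Rabs_le, SIN_bound.
Qed.

Lemma Re_Cplus_Cconj_pos s t : 0 < Re s -> 0 < Re t -> 0 < Re (Cplus s (Cconj t)).
Proof. unfold Re; simpl. lra. Qed.

Lemma filterlim_C {T} (F : (T -> Prop) -> Prop) {FF : Filter F} (f : T -> C) (l : C) :
  filterlim f F (locally l) <->
  filterlim (fun x => Re (f x)) F (locally (Re l)) /\
  filterlim (fun x => Im (f x)) F (locally (Im l)).
Proof.
  rewrite !filterlim_locally. split.
  - intros H. split; intros eps.
    + exact (filter_imp _ _ (fun x Hx => proj1 Hx) (H eps)).
    + exact (filter_imp _ _ (fun x Hx => proj2 Hx) (H eps)).
  - intros [H1 H2] eps. exact (filter_and _ _ (H1 eps) (H2 eps)).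
Qed.

Section ComplexLimits.
Context {T : Type} (F : (T -> Prop) -> Prop) {FF : Filter F}.

Lemma filterlim_Cplus f g a b :
  filterlim f F (locally a) -> filterlim g F (locally b) ->
  filterlim (fun x => Cplus (f x) (g x)) F (locally (Cplus a b)).
Proof. intros Hf Hg. exact (filterlim_comp_2 f g Cplus Hf Hg (filterlim_plus (V := C_NormedModule) a b)). Qed.

Lemma filterlim_Rplus (f g : T -> R) a b :
  filterlim f F (locally a) -> filterlim g F (locally b) ->
  filterlim (fun x => f x + g x) F (locally (a + b)).
Proof. intros Hf Hg. exact (filterlim_comp_2 f g Rplus Hf Hg (filterlim_plus (V := R_NormedModule) a b)). Qed.

Lemma filterlim_Rmult (f g : T -> R) a b :
  filterlim f F (locally a) -> filterlim g F (locally b) ->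
  filterlim (fun x => f x * g x) F (locally (a * b)).
Proof. intros Hf Hg. exact (filterlim_comp_2 f g Rmult Hf Hg (filterlim_mult (K := R_AbsRing) a b)). Qed.

Lemma filterlim_Rminus (f g : T -> R) a b :
  filterlim f F (locally a) -> filterlim g F (locally b) ->
  filterlim (fun x => f x - g x) F (locally (a - b)).
Proof.
  intros Hf Hg. apply filterlim_Rplus; [exact Hf|].
  exact (filterlim_comp _ _ _ _ _ _ _ _ Hg (filterlim_opp (V := R_NormedModule) b)).
Qed.

(* Coquelicot's [filterlim_mult] on [C_AbsRing] uses the [Cmod] balls rather than the
   product topology of [C], so multiplication is handled componentwise. *)
Lemma filterlim_Cmult f g a b :
  filterlim f F (locally a) -> filterlim g F (locally b) ->
  filterlim (fun x => Cmult (f x) (g x)) F (locally (Cmult a b)).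
Proof.
  rewrite !(filterlim_C F). intros [Hf1 Hf2] [Hg1 Hg2]. split.
  - exact (filterlim_Rminus _ _ _ _ (filterlim_Rmult _ _ _ _ Hf1 Hg1) (filterlim_Rmult _ _ _ _ Hf2 Hg2)).
  - exact (filterlim_Rplus _ _ _ _ (filterlim_Rmult _ _ _ _ Hf1 Hg2) (filterlim_Rmult _ _ _ _ Hf2 Hg1)).
Qed.

Lemma filterlim_Cminus f g a b :
  filterlim f F (locally a) -> filterlim g F (locally b) ->
  filterlim (fun x => Cminus (f x) (g x)) F (locally (Cminus a b)).
Proof.
  intros Hf Hg. apply filterlim_Cplus; [exact Hf|].
  exact (filterlim_comp _ _ _ _ _ _ _ _ Hg (filterlim_opp (V := C_NormedModule) b)).
Qed.

Lemma filterlim_sumC N (f : T -> nat -> C) (l : nat -> C) :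
  (forall i, (i < N)%nat -> filterlim (fun x => f x i) F (locally (l i))) ->
  filterlim (fun x => sumC N (f x)) F (locally (sumC N l)).
Proof.
  induction N as [|N IH]; intros Hf; simpl; [apply filterlim_const|].
  apply filterlim_Cplus; [apply IH; intros|]; apply Hf; lia.
Qed.

Lemma filterlim_qform n (B : T -> nat -> nat -> C) A z :
  (forall j k, (j < n)%nat -> (k < n)%nat -> filterlim (fun x => B x j k) F (locally (A j k))) ->
  filterlim (fun x => qform n (B x) z) F (locally (qform n A z)).
Proof.
  intros HB. apply (filterlim_sumC n (fun x j => sumC n (fun k => Cmult (Cmult (B x j k) (z j)) (Cconj (z k))))).
  intros j Hj. apply (filterlim_sumC n (fun x k => Cmult (Cmult (B x j k) (z j)) (Cconj (z k)))).
  intros k Hk. apply filterlim_Cmult; [apply filterlim_Cmult|]; [apply HB; auto | apply filterlim_const ..].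
Qed.

End ComplexLimits.

Lemma filterlim_Rle {T} (F : (T -> Prop) -> Prop) {FF : ProperFilter F} (f g : T -> R) a b :
  F (fun x => f x <= g x) -> filterlim f F (locally a) -> filterlim g F (locally b) -> a <= b.
Proof. exact (filterlim_le f g a b). Qed.

Lemma psd_lim {T} (F : (T -> Prop) -> Prop) {FF : ProperFilter F} n (B : T -> nat -> nat -> C) A :
  F (fun x => psd n (B x)) ->
  (forall j k, (j < n)%nat -> (k < n)%nat -> filterlim (fun x => B x j k) F (locally (A j k))) ->
  psd n A.
Proof.
  intros HB HBA. rewrite psd_qform. intros z.
  destruct (proj1 (filterlim_C F _ _) (filterlim_qform F n B A z HBA)) as [HRe HIm].
  assert (Hq : F (fun x => Im (qform n (B x) z) = 0 /\ 0 <= Re (qform n (B x) z)))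
    by exact (filter_imp _ _ (fun x Hx => Hx z) HB).
  assert (H0 : filterlim (fun _ : T => 0) F (locally 0)) by apply filterlim_const.
  split; [apply Rle_antisym|].
  - refine (filterlim_Rle F _ _ _ _ _ HIm H0). eapply filter_imp; [|exact Hq]. simpl; intros x Hx; lra.
  - refine (filterlim_Rle F _ _ _ _ _ H0 HIm). eapply filter_imp; [|exact Hq]. simpl; intros x Hx; lra.
  - refine (filterlim_Rle F _ _ _ _ _ H0 HRe). eapply filter_imp; [|exact Hq]. simpl; intros x Hx; lra.
Qed.

Definition is_CInt (f : R -> C) (a b : R) (l : C) :=
  is_RInt (fun x => Re (f x)) a b (Re l) /\ is_RInt (fun x => Im (f x)) a b (Im l).

Definition CInt (f : R -> C) (a b : R) : C :=
  (RInt (fun x => Re (f x)) a b, RInt (fun x => Im (f x)) a b).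

Lemma is_CInt_ext f g a b l :
  (forall x, Rmin a b < x < Rmax a b -> f x = g x) -> is_CInt f a b l -> is_CInt g a b l.
Proof.
  intros Hfg [HRe HIm].
  split; [eapply is_RInt_ext; [|exact HRe] | eapply is_RInt_ext; [|exact HIm]];
    intros x Hx; simpl; rewrite Hfg; auto.
Qed.

Lemma is_CInt_plus f g a b lf lg :
  is_CInt f a b lf -> is_CInt g a b lg ->
  is_CInt (fun x => Cplus (f x) (g x)) a b (Cplus lf lg).
Proof. intros [] []. split; apply (is_RInt_plus (V := R_NormedModule)); assumption. Qed.

Lemma is_CInt_minus f g a b lf lg :
  is_CInt f a b lf -> is_CInt g a b lg ->
  is_CInt (fun x => Cminus (f x) (g x)) a b (Cminus lf lg).
Proof. intros [] []. split; apply (is_RInt_minus (V := R_NormedModule)); assumption. Qed.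

Lemma is_CInt_Cmult_l c f a b l :
  is_CInt f a b l -> is_CInt (fun x => Cmult c (f x)) a b (Cmult c l).
Proof.
  intros [HRe HIm]. split; simpl.
  - apply (is_RInt_minus (V := R_NormedModule)); apply (is_RInt_scal (V := R_NormedModule)); assumption.
  - apply (is_RInt_plus (V := R_NormedModule)); apply (is_RInt_scal (V := R_NormedModule)); assumption.
Qed.

Lemma is_CInt_Cmult_r c f a b l :
  is_CInt f a b l -> is_CInt (fun x => Cmult (f x) c) a b (Cmult l c).
Proof.
  intros Hf. rewrite Cmult_comm. apply (is_CInt_ext (fun x => Cmult c (f x))).
  - intros x _. apply Cmult_comm.
  - apply is_CInt_Cmult_l, Hf.
Qed.

Lemma is_CInt_0 a b : is_CInt (fun _ => RtoC 0) a b (RtoC 0).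
Proof.
  assert (H0 := is_RInt_const (V := R_NormedModule) a b 0).
  rewrite (scal_zero_r (V := R_NormedModule)) in H0. split; exact H0.
Qed.

Lemma is_CInt_sumC N (f : nat -> R -> C) a b (l : nat -> C) :
  (forall i, (i < N)%nat -> is_CInt (f i) a b (l i)) ->
  is_CInt (fun x => sumC N (fun i => f i x)) a b (sumC N l).
Proof.
  induction N as [|N IH]; intros Hf; simpl; [apply is_CInt_0|].
  apply (is_CInt_plus (fun x => sumC N (fun i => f i x)) (f N)); [apply IH; intros|]; apply Hf; lia.
Qed.

Lemma is_CInt_comp_scal f u a b l :
  is_CInt f (u * a) (u * b) l -> is_CInt (fun y => Cmult (RtoC u) (f (u * y))) a b l.
Proof.
  intros [HRe HIm].
  rewrite <- (Rplus_0_r (u * a)), <- (Rplus_0_r (u * b)) in HRe, HIm.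
  apply (is_RInt_comp_lin (V := R_NormedModule)) in HRe, HIm.
  split; [eapply is_RInt_ext; [|exact HRe] | eapply is_RInt_ext; [|exact HIm]];
    intros x _; cbv beta; rewrite Rplus_0_r; unfold Re, Im; simpl; change scal with Rmult; ring.
Qed.

Lemma is_CInt_CInt f a b :
  ex_RInt (fun x => Re (f x)) a b -> ex_RInt (fun x => Im (f x)) a b ->
  is_CInt f a b (CInt f a b).
Proof. intros; split; apply (RInt_correct (V := R_CompleteNormedModule)); assumption. Qed.

Lemma is_CInt_unique f a b l : is_CInt f a b l -> CInt f a b = l.
Proof.
  intros [HRe HIm]. unfold CInt.
  rewrite (is_RInt_unique _ _ _ _ HRe), (is_RInt_unique _ _ _ _ HIm). destruct l; reflexivity.
Qed.

Lemma is_CInt_qform n (B : R -> nat -> nat -> C) L a b z :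
  (forall j k, (j < n)%nat -> (k < n)%nat -> is_CInt (fun y => B y j k) a b (L j k)) ->
  is_CInt (fun y => qform n (B y) z) a b (qform n L z).
Proof.
  intros HB.
  apply (is_CInt_sumC n (fun j y => sumC n (fun k => Cmult (Cmult (B y j k) (z j)) (Cconj (z k))))).
  intros j Hj. apply (is_CInt_sumC n (fun k y => Cmult (Cmult (B y j k) (z j)) (Cconj (z k)))).
  intros k Hk. apply is_CInt_Cmult_r, is_CInt_Cmult_r, HB; assumption.
Qed.

(* The quadratic form commutes with the integral. *)
Lemma psd_integral n (B : R -> nat -> nat -> C) L u v :
  u <= v -> (forall y, u < y < v -> psd n (B y)) ->
  (forall j k, (j < n)%nat -> (k < n)%nat -> is_CInt (fun y => B y j k) u v (L j k)) ->
  psd n L.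
Proof.
  intros Huv HB HL. rewrite psd_qform. intros z.
  destruct (is_CInt_qform n B L u v z HL) as [HRe HIm].
  split.
  - rewrite <- (is_RInt_unique _ _ _ _ HIm), (RInt_ext _ (fun _ => 0)).
    + rewrite RInt_const. apply (scal_zero_r (V := R_NormedModule)).
    + rewrite Rmin_left, Rmax_right by assumption. intros y Hy. apply (HB y Hy z).
  - apply (is_RInt_ge_0 _ _ _ _ Huv HRe). intros y Hy. apply (HB y Hy z).
Qed.

Lemma abs_RInt_le_antiderivative (f G g : R -> R) x y :
  (forall t, Rmin x y <= t <= Rmax x y -> continuous f t) ->
  (forall t, Rmin x y <= t <= Rmax x y -> continuous g t) ->
  (forall t, Rmin x y <= t <= Rmax x y -> is_derive G t (g t)) ->
  (forall t, Rmin x y <= t <= Rmax x y -> Rabs (f t) <= g t) ->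
  Rabs (RInt f x y) <= Rabs (G y - G x).
Proof.
  intros Hf Hg HG Hfg.
  assert (Ef : ex_RInt f x y) by exact (ex_RInt_continuous (V := R_CompleteNormedModule) f x y Hf).
  assert (Eg : is_RInt g x y (G y - G x))
    by exact (is_RInt_derive (V := R_CompleteNormedModule) G g x y HG Hg).
  destruct (Rle_lt_dec x y) as [Hxy|Hxy].
  - rewrite Rmin_left, Rmax_right in Hfg by lra.
    eapply Rle_trans; [|apply Rle_abs].
    exact (norm_RInt_le f g x y _ _ Hxy Hfg (RInt_correct _ _ _ Ef) Eg).
  - rewrite Rmin_right, Rmax_left in Hfg by lra.
    rewrite <- (opp_RInt_swap f y x (ex_RInt_swap _ _ _ Ef)), Rabs_minus_sym.
    eapply Rle_trans; [|apply Rle_abs]. unfold opp; simpl. rewrite Rabs_Ropp.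
    replace (G x - G y) with (opp (G y - G x)) by (unfold opp; simpl; ring).
    apply (norm_RInt_le f g y x _ _ (Rlt_le _ _ Hxy) Hfg).
    + apply (RInt_correct (V := R_CompleteNormedModule)), ex_RInt_swap, Ef.
    + apply (is_RInt_swap (V := R_NormedModule)), Eg.
Qed.

(** * Improper integrals over (0, +oo) *)

Definition at_0_infty : (R * R -> Prop) -> Prop :=
  filter_prod (at_right 0) (Rbar_locally p_infty).

Global Instance at_0_infty_proper : ProperFilter at_0_infty.
Proof. apply filter_prod_proper; typeclasses eauto. Qed.

Lemma at_0_infty_intro (P : R * R -> Prop) d M :
  0 < d -> (forall a b, 0 < a < d -> M < b -> P (a, b)) -> at_0_infty P.
Proof.
  intros Hd HP. apply Filter_prod with (fun a => 0 < a < d) (fun b => M < b).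
  - exists (mkposreal d Hd). intros y Hy Hy0. simpl in *.
    unfold ball in Hy; simpl in Hy. unfold AbsRing_ball, abs, minus, plus, opp in Hy; simpl in Hy.
    apply Rabs_lt_between in Hy. lra.
  - exists M. auto.
  - auto.
Qed.

Lemma filterlim_scal_at_0_infty c :
  0 < c -> filterlim (fun uv : R * R => (c * fst uv, c * snd uv)) at_0_infty at_0_infty.
Proof.
  intros Hc P [Q S [eps Heps] [M HM] HQS].
  apply Filter_prod with (fun x => Q (c * x)) (fun y => S (c * y)).
  - assert (Hec : 0 < eps / c) by (apply Rdiv_lt_0_compat; [apply cond_pos|assumption]).
    exists (mkposreal _ Hec). intros y Hy Hy0. apply Heps; [|simpl; nra].
    unfold ball in Hy |- *; simpl in *. unfold AbsRing_ball, abs, minus, plus, opp in *; simpl in *.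
    rewrite Ropp_0, Rplus_0_r in *. rewrite Rabs_mult, (Rabs_pos_eq c) by lra.
    apply (Rmult_lt_compat_l c) in Hy; [|assumption].
    replace (c * (eps / c)) with (pos eps) in Hy by (field; lra). exact Hy.
  - exists (M / c). intros x Hx. apply HM.
    apply (Rmult_lt_compat_l c) in Hx; [|assumption].
    replace (c * (M / c)) with M in Hx by (field; lra). exact Hx.
  - intros x y Hx Hy. apply HQS; assumption.
Qed.

Section ImproperIntegral.

Variables (f : R -> R) (sig K : R).
Hypothesis Hsig : 0 < sig.
Hypothesis HK : 0 <= K.
Hypothesis Hf_cont : forall x, 0 < x -> continuous f x.
Hypothesis Hf_0 : forall x, 0 < x <= 1 -> Rabs (f x) <= Rpower x (sig - 1).
Hypothesis Hf_infty : forall x, 1 <= x -> Rabs (f x) <= K * exp (- x / 2).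

Lemma ex_RInt_pos a b : 0 < a -> 0 < b -> ex_RInt f a b.
Proof.
  intros Ha Hb. apply (ex_RInt_continuous (V := R_CompleteNormedModule)). intros z Hz.
  apply Hf_cont. apply Rlt_le_trans with (Rmin a b); [apply Rmin_glb_lt|]; tauto.
Qed.

Lemma abs_RInt_near_0 x y d :
  0 < x <= d -> 0 < y <= d -> d <= 1 -> Rabs (RInt f x y) <= / sig * Rpower d sig.
Proof.
  intros Hx Hy Hd.
  assert (Hlo : 0 < Rmin x y) by (apply Rmin_glb_lt; lra).
  assert (Hhi : Rmax x y <= d) by (apply Rmax_lub; lra).
  eapply Rle_trans.
  - apply (abs_RInt_le_antiderivative f (fun t => / sig * Rpower t sig) (fun t => Rpower t (sig - 1)));
      intros t Ht.
    + apply Hf_cont. lra.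
    + apply continuous_Rpower. lra.
    + replace (Rpower t (sig - 1)) with (/ sig * (sig * Rpower t (sig - 1))) by (field; lra).
      apply (is_derive_scal (fun x => Rpower x sig)), is_derive_Rpower. lra.
    + apply Hf_0. lra.
  - assert (Hle : forall t, 0 < t <= d -> 0 <= / sig * Rpower t sig <= / sig * Rpower d sig).
    { intros t Ht. assert (0 < / sig) by (apply Rinv_0_lt_compat, Hsig).
      assert (Rpower t sig <= Rpower d sig) by (apply Rle_Rpower_l; lra).
      assert (0 < Rpower t sig) by apply Rpower_pos. split; nra. }
    specialize (Hle x Hx) as Hlex. specialize (Hle y Hy) as Hley.
    apply Rabs_le. lra.
Qed.

Lemma abs_RInt_near_infty x y M :
  1 <= M -> M <= x -> M <= y -> Rabs (RInt f x y) <= 2 * K * exp (- M / 2).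
Proof.
  intros HM Hx Hy.
  assert (Hlo : M <= Rmin x y) by (apply Rmin_glb; lra).
  eapply Rle_trans.
  - apply (abs_RInt_le_antiderivative f (fun t => - 2 * K * exp (- t / 2)) (fun t => K * exp (- t / 2)));
      intros t Ht.
    + apply Hf_cont. lra.
    + apply (ex_derive_continuous (K := R_AbsRing) (V := R_NormedModule)). auto_derive. auto.
    + auto_derive; [exact I|]. unfold Rdiv. set (E := exp _). change (RinvImpl.Rinv 2) with (/ 2). field.
    + apply Hf_infty. lra.
  - assert (Hle : forall t, M <= t -> - 2 * K * exp (- M / 2) <= - 2 * K * exp (- t / 2) <= 0).
    { intros t Ht. assert (exp (- t / 2) <= exp (- M / 2)) by (apply exp_le_compat; lra).
      assert (0 < exp (- t / 2)) by apply exp_pos. split; nra. }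
    specialize (Hle x Hx) as Hlex. specialize (Hle y Hy) as Hley.
    apply Rabs_le. lra.
Qed.

Lemma filterlim_RInt_at_0_infty_ex :
  exists l, filterlim (fun uv => RInt f (fst uv) (snd uv)) at_0_infty (locally l).
Proof.
  apply (filterlim_locally_cauchy (U := R_CompleteSpace) (F := at_0_infty)). intros eps.
  destruct (exists_Rpower_le sig (sig * (eps / 4))) as [d [[Hd Hd1] Hdp]];
    [assumption | apply Rmult_lt_0_compat; [assumption | apply Rdiv_lt_0_compat; [apply cond_pos | lra]]|].
  destruct (exists_exp_le (2 * K) (eps / 4)) as [M [HM Hup]]; [lra | apply Rdiv_lt_0_compat; [apply cond_pos | lra]|].
  assert (Hlow : / sig * Rpower d sig <= eps / 4).
  { apply (Rmult_le_reg_l sig); [assumption|]. rewrite <- Rmult_assoc, Rinv_r; lra. }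
  exists (fun uv => 0 < fst uv < d /\ M < snd uv). split.
  - apply (at_0_infty_intro _ d M); [lra|]. simpl; auto.
  - intros [a b] [a' b'] [Ha Hb] [Ha' Hb']. simpl in *.
    unfold ball; simpl. unfold AbsRing_ball, abs, minus, plus, opp; simpl.
    rewrite <- (RInt_Chasles f a' a b') by (apply ex_RInt_pos; lra).
    rewrite <- (RInt_Chasles f a b b') by (apply ex_RInt_pos; lra).
    change (Rabs (RInt f a' a + (RInt f a b + RInt f b b') + - RInt f a b) < eps).
    replace (RInt f a' a + (RInt f a b + RInt f b b') + - RInt f a b) with (RInt f a' a + RInt f b b') by ring.
    eapply Rle_lt_trans; [apply Rabs_triang|].
    assert (Rabs (RInt f a' a) <= / sig * Rpower d sig) by (apply abs_RInt_near_0; lra).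
    assert (Rabs (RInt f b b') <= 2 * K * exp (- M / 2)) by (apply abs_RInt_near_infty; lra).
    assert (0 < pos eps) by apply cond_pos. lra.
Qed.

Lemma filterlim_RInt_at_0_infty :
  filterlim (fun uv => RInt f (fst uv) (snd uv)) at_0_infty
    (locally (RInt_gen f (at_right 0) (Rbar_locally p_infty))).
Proof.
  destruct filterlim_RInt_at_0_infty_ex as [l Hl].
  replace (RInt_gen f (at_right 0) (Rbar_locally p_infty)) with l; [exact Hl|].
  symmetry. apply (is_RInt_gen_unique (V := R_CompleteNormedModule)).
  intros P HP. specialize (Hl P HP). unfold filtermap in Hl.
  assert (Hpos : at_0_infty (fun uv => 0 < fst uv /\ 0 < snd uv))
    by (apply (at_0_infty_intro _ 1 0); simpl; intros; lra).
  unfold filtermapi. generalize (filter_and _ _ Hl Hpos). apply filter_imp.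
  intros [a b] [Hab [Ha Hb]]. exists (RInt f a b). split; [|exact Hab].
  apply (RInt_correct (V := R_CompleteNormedModule)), ex_RInt_pos; assumption.
Qed.

End ImproperIntegral.

(** * The Gamma integral and its Laplace rescaling *)

(* [(2K)^K e^(-K)] is the maximum of [t^K e^(-t/2)], attained at [t = 2K]. *)
Definition gamma_tail_const (sig : R) : R :=
  let K := Rmax (sig - 1) 1 in Rpower (2 * K) K * exp (- K).

Lemma gamma_tail_const_nonneg sig : 0 <= gamma_tail_const sig.
Proof. left. apply Rmult_lt_0_compat; [apply Rpower_pos | apply exp_pos]. Qed.

Lemma Rpower_exp_le_gamma_tail sig t :
  1 <= t -> Rpower t (sig - 1) * exp (- t) <= gamma_tail_const sig * exp (- t / 2).
Proof.
  intros Ht. unfold gamma_tail_const, Rpower. set (K := Rmax (sig - 1) 1).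
  assert (HK1 : 1 <= K) by apply Rmax_r. assert (HK2 : sig - 1 <= K) by apply Rmax_l.
  rewrite <- !exp_plus. apply exp_le_compat.
  assert (Hlnt : 0 <= ln t) by (rewrite <- ln_1; apply ln_le; lra).
  assert (Hln : ln (t / (2 * K)) <= t / (2 * K) - 1).
  { assert (H := exp_ineq1_le (ln (t / (2 * K)))).
    rewrite exp_ln in H by (apply Rdiv_lt_0_compat; lra). lra. }
  rewrite ln_div in Hln by lra.
  assert (HKln : K * (ln t - ln (2 * K)) <= t / 2 - K).
  { replace (t / 2 - K) with (K * (t / (2 * K) - 1)) by (field; lra).
    apply Rmult_le_compat_l; lra. }
  assert ((sig - 1) * ln t <= K * ln t) by (apply Rmult_le_compat_r; lra).
  lra.
Qed.

Definition gamma_integrand (w : C) (t : R) : C :=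
  (Re (cpow_pos t (Cminus w (RtoC 1))) * exp (- t),
   Im (cpow_pos t (Cminus w (RtoC 1))) * exp (- t)).

Lemma gamma_integrand_Cmult w t :
  gamma_integrand w t = Cmult (cpow_pos t (Cminus w (RtoC 1))) (RtoC (exp (- t))).
Proof. unfold gamma_integrand, Cmult, RtoC, Re, Im; simpl. f_equal; ring. Qed.

Section GammaIntegral.

Variable w : C.
Hypothesis Hw : 0 < Re w.

Lemma Re_Cminus_1 : Re (Cminus w (RtoC 1)) = Re w - 1.
Proof. unfold Re; simpl. ring. Qed.

Lemma continuous_Re_gamma_integrand t : 0 < t -> continuous (fun x => Re (gamma_integrand w x)) t.
Proof.
  intros Ht. apply (ex_derive_continuous (K := R_AbsRing) (V := R_NormedModule)).
  unfold gamma_integrand, cpow_pos; simpl. auto_derive. auto.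
Qed.

Lemma continuous_Im_gamma_integrand t : 0 < t -> continuous (fun x => Im (gamma_integrand w x)) t.
Proof.
  intros Ht. apply (ex_derive_continuous (K := R_AbsRing) (V := R_NormedModule)).
  unfold gamma_integrand, cpow_pos; simpl. auto_derive. auto.
Qed.

Lemma abs_Re_gamma_integrand_le t :
  Rabs (Re (gamma_integrand w t)) <= Rpower t (Re w - 1) * exp (- t).
Proof.
  change (Re (gamma_integrand w t)) with (Re (cpow_pos t (Cminus w (RtoC 1))) * exp (- t)).
  rewrite Rabs_mult, (Rabs_pos_eq (exp _)) by (left; apply exp_pos).
  apply Rmult_le_compat_r; [left; apply exp_pos|]. rewrite <- Re_Cminus_1. apply Re_cpow_pos_le.
Qed.

Lemma abs_Im_gamma_integrand_le t :
  Rabs (Im (gamma_integrand w t)) <= Rpower t (Re w - 1) * exp (- t).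
Proof.
  change (Im (gamma_integrand w t)) with (Im (cpow_pos t (Cminus w (RtoC 1))) * exp (- t)).
  rewrite Rabs_mult, (Rabs_pos_eq (exp _)) by (left; apply exp_pos).
  apply Rmult_le_compat_r; [left; apply exp_pos|]. rewrite <- Re_Cminus_1. apply Im_cpow_pos_le.
Qed.

Lemma gamma_bound_near_0 (g : R -> R) :
  (forall t, Rabs (g t) <= Rpower t (Re w - 1) * exp (- t)) ->
  forall t, 0 < t <= 1 -> Rabs (g t) <= Rpower t (Re w - 1).
Proof.
  intros Hg t Ht. eapply Rle_trans; [apply Hg|].
  rewrite <- (Rmult_1_r (Rpower t (Re w - 1))) at 2.
  apply Rmult_le_compat_l; [left; apply Rpower_pos|].
  rewrite <- exp_0. apply exp_le_compat. lra.
Qed.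

Lemma gamma_bound_near_infty (g : R -> R) :
  (forall t, Rabs (g t) <= Rpower t (Re w - 1) * exp (- t)) ->
  forall t, 1 <= t -> Rabs (g t) <= gamma_tail_const (Re w) * exp (- t / 2).
Proof. intros Hg t Ht. eapply Rle_trans; [apply Hg | apply Rpower_exp_le_gamma_tail, Ht]. Qed.

Lemma filterlim_CInt_gamma :
  filterlim (fun uv => CInt (gamma_integrand w) (fst uv) (snd uv)) at_0_infty (locally (cGamma w)).
Proof.
  apply (filterlim_C at_0_infty). split.
  - apply (filterlim_RInt_at_0_infty _ (Re w) (gamma_tail_const (Re w))).
    + exact Hw.
    + apply gamma_tail_const_nonneg.
    + apply continuous_Re_gamma_integrand.
    + apply gamma_bound_near_0, abs_Re_gamma_integrand_le.
    + apply gamma_bound_near_infty, abs_Re_gamma_integrand_le.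
  - apply (filterlim_RInt_at_0_infty _ (Re w) (gamma_tail_const (Re w))).
    + exact Hw.
    + apply gamma_tail_const_nonneg.
    + apply continuous_Im_gamma_integrand.
    + apply gamma_bound_near_0, abs_Im_gamma_integrand_le.
    + apply gamma_bound_near_infty, abs_Im_gamma_integrand_le.
Qed.

Lemma is_CInt_gamma_integrand a b :
  0 < a -> 0 < b -> is_CInt (gamma_integrand w) a b (CInt (gamma_integrand w) a b).
Proof.
  intros Ha Hb.
  assert (Hpos : forall z, Rmin a b <= z <= Rmax a b -> 0 < z)
    by (intros z Hz; apply Rlt_le_trans with (Rmin a b); [apply Rmin_glb_lt|]; tauto).
  apply is_CInt_CInt; apply (ex_RInt_continuous (V := R_CompleteNormedModule)); intros z Hz;
    [apply continuous_Re_gamma_integrand | apply continuous_Im_gamma_integrand]; auto.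
Qed.

End GammaIntegral.

Definition laplace_integrand (w : C) (a y : R) : C :=
  Cmult (cpow_pos y (Cminus w (RtoC 1))) (RtoC (exp (- (a * y)))).

Lemma laplace_integrand_scal w a y : 0 < a -> 0 < y ->
  laplace_integrand w a y =
  Cmult (cpow_pos a (Copp w)) (Cmult (RtoC a) (gamma_integrand w (a * y))).
Proof.
  intros Ha Hy. unfold laplace_integrand.
  rewrite gamma_integrand_Cmult, cpow_pos_mult, (cpow_pos_Cminus_1 a) by assumption.
  set (Y := cpow_pos y (Cminus w (RtoC 1))). set (E := RtoC (exp (- (a * y)))).
  transitivity (Cmult (Cmult (cpow_pos a (Copp w)) (cpow_pos a w)) (Cmult (RtoC (a * / a)) (Cmult Y E))).
  - rewrite cpow_pos_Copp_l, Rinv_r by lra. C_ring.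
  - C_ring.
Qed.

Lemma is_CInt_laplace_integrand w a u v : 0 < a -> 0 < u -> 0 < v ->
  is_CInt (laplace_integrand w a) u v
    (Cmult (cpow_pos a (Copp w)) (CInt (gamma_integrand w) (a * u) (a * v))).
Proof.
  intros Ha Hu Hv.
  assert (H := is_CInt_gamma_integrand w (a * u) (a * v) ltac:(nra) ltac:(nra)).
  apply is_CInt_comp_scal, (is_CInt_Cmult_l (cpow_pos a (Copp w))) in H.
  refine (is_CInt_ext _ _ _ _ _ _ H). intros y Hy. symmetry. apply laplace_integrand_scal; [exact Ha|].
  apply Rlt_trans with (Rmin u v); [apply Rmin_glb_lt|]; tauto.
Qed.

Lemma is_CInt_laplace_integrand_CInt w a u v : 0 < a -> 0 < u -> 0 < v ->
  is_CInt (laplace_integrand w a) u v (CInt (laplace_integrand w a) u v).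
Proof.
  intros Ha Hu Hv. assert (H := is_CInt_laplace_integrand w a u v Ha Hu Hv).
  rewrite (is_CInt_unique _ _ _ _ H). exact H.
Qed.

Lemma filterlim_CInt_laplace w a : 0 < Re w -> 0 < a ->
  filterlim (fun uv => CInt (laplace_integrand w a) (fst uv) (snd uv)) at_0_infty
    (locally (Cmult (cpow_pos a (Copp w)) (cGamma w))).
Proof.
  intros Hw Ha.
  apply (filterlim_ext_loc
    (fun uv => Cmult (cpow_pos a (Copp w)) (CInt (gamma_integrand w) (a * fst uv) (a * snd uv)))).
  - apply (at_0_infty_intro _ 1 0); [lra|]. intros u v Hu Hv. simpl. symmetry.
    apply is_CInt_unique, is_CInt_laplace_integrand; lra.
  - apply (filterlim_Cmult at_0_infty); [apply filterlim_const|].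
    apply (filterlim_comp _ _ _ (fun uv : R * R => (a * fst uv, a * snd uv))
      (fun uv => CInt (gamma_integrand w) (fst uv) (snd uv)) at_0_infty at_0_infty).
    + apply filterlim_scal_at_0_infty, Ha.
    + apply filterlim_CInt_gamma, Hw.
Qed.

Lemma laplace_integrand_Cconj s t a y : 0 < y ->
  laplace_integrand (Cplus s (Cconj t)) a y =
  Cmult (RtoC (exp (- (a * y)) / y)) (Cmult (cpow_pos y s) (Cconj (cpow_pos y t))).
Proof.
  intros Hy. unfold laplace_integrand.
  rewrite cpow_pos_Cminus_1, cpow_pos_Cplus, cpow_pos_Cconj by assumption.
  unfold Rdiv. C_ring.
Qed.

Lemma psd_mult_laplace_diff n A (s : nat -> C) a b :
  psd n A -> (forall j, (j < n)%nat -> 0 < Re (s j)) -> 0 < a < b ->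
  psd n (fun j k =>
    let w := Cplus (s j) (Cconj (s k)) in
    Cmult (A j k) (Cmult (Cminus (cpow_pos a (Copp w)) (cpow_pos b (Copp w))) (cGamma w))).
Proof.
  intros HA Hs Hab.
  set (w := fun j k => Cplus (s j) (Cconj (s k))).
  apply (psd_ext n (fun j k => Cmult (A j k)
    (Cminus (Cmult (cpow_pos a (Copp (w j k))) (cGamma (w j k)))
            (Cmult (cpow_pos b (Copp (w j k))) (cGamma (w j k)))))); [intros; C_ring|].
  apply (psd_lim at_0_infty n (fun uv j k => Cmult (A j k)
    (Cminus (CInt (laplace_integrand (w j k) a) (fst uv) (snd uv))
            (CInt (laplace_integrand (w j k) b) (fst uv) (snd uv))))).
  - apply (at_0_infty_intro _ 1 1); [lra|]. intros u v Hu Hv. simpl.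
    apply (psd_integral n (fun y j k => Cmult (RtoC ((exp (- (a * y)) - exp (- (b * y))) / y))
      (Cmult (A j k) (Cmult (cpow_pos y (s j)) (Cconj (cpow_pos y (s k)))))) _ u v); [lra| |].
    + intros y Hy. apply psd_scal; [|apply psd_mult_rank1, HA].
      assert (exp (- (b * y)) < exp (- (a * y))) by (apply exp_increasing; nra).
      apply Rdiv_le_0_compat; lra.
    + intros j k Hj Hk.
      apply (is_CInt_ext (fun y => Cmult (A j k)
        (Cminus (laplace_integrand (w j k) a y) (laplace_integrand (w j k) b y)))).
      * intros y Hy. rewrite Rmin_left, Rmax_right in Hy by lra.
        unfold w. rewrite !laplace_integrand_Cconj by lra. unfold Rdiv. C_ring.
      * apply is_CInt_Cmult_l, is_CInt_minus; apply is_CInt_laplace_integrand_CInt; lra.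
  - intros j k Hj Hk. apply (filterlim_Cmult at_0_infty); [apply filterlim_const|].
    apply (filterlim_Cminus at_0_infty); apply filterlim_CInt_laplace;
      [apply Re_Cplus_Cconj_pos; auto | lra | apply Re_Cplus_Cconj_pos; auto | lra].
Qed.

(** * The alternating Dirichlet series *)

Lemma sum_n_alternating (psi : nat -> R) n :
  sum_n (fun k => (-1) ^ k * psi k) (S (2 * n)) = sum_n (fun i => psi (2 * i)%nat - psi (S (2 * i))) n.
Proof.
  induction n as [|n IH].
  - rewrite sum_Sn, !sum_O. simpl. unfold plus; simpl. ring.
  - replace (S (2 * S n)) with (S (S (S (2 * n)))) by lia.
    rewrite (sum_Sn _ (S (S (2 * n)))), (sum_Sn _ (S (2 * n))), IH, (sum_Sn _ n).
    replace (S (S (2 * n))) with (2 * S n)%nat by lia.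
    rewrite pow_1_odd, pow_1_even. unfold plus; simpl. ring.
Qed.

Lemma is_lim_seq_even_odd (u : nat -> R) (l : R) :
  is_lim_seq (fun n => u (2 * n)%nat) l -> is_lim_seq (fun n => u (S (2 * n))) l -> is_lim_seq u l.
Proof.
  rewrite <- !is_lim_seq_spec. intros He Ho eps.
  destruct (He eps) as [N1 H1], (Ho eps) as [N2 H2].
  exists (2 * N1 + 2 * N2)%nat. intros n Hn.
  destruct (Nat.Even_or_Odd n) as [[m ->]|[m ->]].
  - apply H1. lia.
  - replace (2 * m + 1)%nat with (S (2 * m)) by lia. apply H2. lia.
Qed.

Lemma is_lim_seq_alternating (psi : nat -> R) (L : R) :
  is_lim_seq (sum_n (fun i => psi (2 * i)%nat - psi (S (2 * i)))) L -> is_lim_seq psi 0 ->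
  is_lim_seq (sum_n (fun k => (-1) ^ k * psi k)) L.
Proof.
  intros HL H0. apply is_lim_seq_even_odd.
  - apply is_lim_seq_ext with
      (fun n => sum_n (fun i => psi (2 * i)%nat - psi (S (2 * i))) n - (-1) * psi (S (2 * n))).
    { intros n. rewrite <- sum_n_alternating, sum_Sn, pow_1_odd. unfold plus; simpl. ring. }
    replace L with (L - (-1) * 0) by ring. apply is_lim_seq_minus'; [exact HL|].
    apply (is_lim_seq_scal_l (fun n => psi (S (2 * n))) (-1) 0).
    apply (is_lim_seq_subseq psi 0 (fun n => S (2 * n))); [|exact H0].
    apply eventually_subseq. intros; lia.
  - apply is_lim_seq_ext with (sum_n (fun i => psi (2 * i)%nat - psi (S (2 * i)))); [|exact HL].
    intros n. symmetry. apply sum_n_alternating.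
Qed.

Lemma is_lim_seq_Rpower_0 p (f : nat -> R) :
  p < 0 -> (forall n, INR n <= f n) -> (forall n, 0 < f n) -> is_lim_seq (fun n => Rpower (f n) p) 0.
Proof.
  intros Hp Hf Hf0. rewrite <- is_lim_seq_spec. intros eps.
  assert (HI := is_lim_seq_INR). rewrite <- is_lim_seq_spec in HI.
  destruct (HI (exp (ln eps / p))) as [N HN]. exists N. intros n Hn.
  specialize (HN n Hn). rewrite Rminus_0_r, Rabs_pos_eq by (left; apply Rpower_pos).
  unfold Rpower. rewrite <- (exp_ln eps) by apply cond_pos. apply exp_increasing.
  assert (ln eps / p < ln (f n)).
  { rewrite <- (ln_exp (ln eps / p)). apply ln_increasing; [apply exp_pos|]. specialize (Hf n). lra. }
  apply (Rmult_lt_reg_r (/ (- p))); [apply Rinv_0_lt_compat; lra|].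
  replace (p * ln (f n) * / - p) with (- ln (f n)) by (field; lra).
  replace (ln eps * / - p) with (- (ln eps / p)) by (field; lra). lra.
Qed.

Lemma ex_series_telescoping (t : nat -> R) c :
  is_lim_seq t 0 -> ex_series (fun i => c * (t i - t (S i))).
Proof.
  intros Ht. exists (c * t O).
  assert (Hsum : forall n, sum_n (fun i => c * (t i - t (S i))) n = c * (t O - t (S n))).
  { induction n as [|n IH]; [apply sum_O|].
    rewrite sum_Sn, IH. unfold plus; simpl. ring. }
  change (is_lim_seq (sum_n (fun i => c * (t i - t (S i)))) (c * t O)).
  apply (is_lim_seq_ext (fun n => c * (t O - t (S n)))); [intros; symmetry; apply Hsum|].
  replace (c * t O) with (c * (t O - 0)) by ring.
  apply (is_lim_seq_scal_l _ c (t O - 0)), is_lim_seq_minus'; [apply is_lim_seq_const|].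
  apply (is_lim_seq_incr_1 t 0), Ht.
Qed.

Lemma abs_diff_le_Rpower (g dg : R -> R) p K a b :
  p < 0 -> 0 <= K -> 0 < a <= b ->
  (forall x, 0 < x -> is_derive g x (dg x)) -> (forall x, 0 < x -> continuous dg x) ->
  (forall x, 0 < x -> Rabs (dg x) <= K * Rpower x (p - 1)) ->
  Rabs (g b - g a) <= K / (- p) * (Rpower a p - Rpower b p).
Proof.
  intros Hp HK Hab Hg Hdg Hbound.
  assert (Hpos : forall x, Rmin a b <= x <= Rmax a b -> 0 < x)
    by (rewrite Rmin_left, Rmax_right by lra; intros; lra).
  assert (HI : is_RInt dg a b (g b - g a))
    by (apply (is_RInt_derive (V := R_CompleteNormedModule)); intros x Hx; auto).
  rewrite <- (is_RInt_unique _ _ _ _ HI).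
  eapply Rle_trans.
  - apply (abs_RInt_le_antiderivative dg (fun t => K / p * Rpower t p) (fun t => K * Rpower t (p - 1)));
      intros t Ht; specialize (Hpos t Ht).
    + auto.
    + apply (ex_derive_continuous (K := R_AbsRing) (V := R_NormedModule)).
      apply (ex_derive_scal (fun x => Rpower x (p - 1))). eexists. apply is_derive_Rpower, Hpos.
    + replace (K * Rpower t (p - 1)) with (K / p * (p * Rpower t (p - 1))) by (field; lra).
      apply (is_derive_scal (fun x => Rpower x p)), is_derive_Rpower, Hpos.
    + auto.
  - assert (Rpower b p <= Rpower a p) by (apply Rpower_le_Rpower_neg; lra).
    right. rewrite Rabs_pos_eq; [field; lra|].
    replace (K / p * Rpower b p - K / p * Rpower a p) with (K / (- p) * (Rpower a p - Rpower b p))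
      by (field; lra).
    apply Rmult_le_pos; [apply Rdiv_le_0_compat|]; lra.
Qed.

Definition cpow_phase (p q phi x : R) : R := exp (p * ln x) * cos (q * ln x + phi).

Lemma Re_cpow_pos_phase x s : Re (cpow_pos x s) = cpow_phase (Re s) (Im s) 0 x.
Proof. unfold cpow_phase. rewrite Rplus_0_r. reflexivity. Qed.

Lemma Im_cpow_pos_phase x s : Im (cpow_pos x s) = cpow_phase (Re s) (Im s) (- (PI / 2)) x.
Proof.
  unfold cpow_phase. replace (Im s * ln x + - (PI / 2)) with (- (PI / 2 - Im s * ln x)) by ring.
  rewrite cos_neg, cos_shift. reflexivity.
Qed.

Lemma abs_cpow_phase_le p q phi x : Rabs (cpow_phase p q phi x) <= Rpower x p.
Proof.
  unfold cpow_phase, Rpower. rewrite Rabs_mult, Rabs_pos_eq by (left; apply exp_pos).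
  rewrite <- (Rmult_1_r (exp (p * ln x))) at 2.
  apply Rmult_le_compat_l; [left; apply exp_pos | apply Rabs_le, COS_bound].
Qed.

Lemma is_derive_cpow_phase p q phi x : 0 < x ->
  is_derive (cpow_phase p q phi) x
    (Rpower x (p - 1) * (p * cos (q * ln x + phi) - q * sin (q * ln x + phi))).
Proof.
  intros Hx. rewrite Rpower_minus_1 by assumption. unfold cpow_phase.
  auto_derive; [auto|]. field. lra.
Qed.

Lemma abs_cpow_phase_diff_le p q phi a b : p < 0 -> 0 < a <= b ->
  Rabs (cpow_phase p q phi b - cpow_phase p q phi a)
  <= (Rabs p + Rabs q) / (- p) * (Rpower a p - Rpower b p).
Proof.
  intros Hp Hab.
  apply (abs_diff_le_Rpower _
    (fun x => Rpower x (p - 1) * (p * cos (q * ln x + phi) - q * sin (q * ln x + phi))));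
    [assumption | pose proof (Rabs_pos p); pose proof (Rabs_pos q); lra | assumption
    | apply is_derive_cpow_phase | |].
  - intros x Hx. apply (ex_derive_continuous (K := R_AbsRing) (V := R_NormedModule)).
    unfold Rpower. auto_derive. auto.
  - intros x Hx. rewrite Rabs_mult, Rmult_comm, (Rabs_pos_eq (Rpower x (p - 1))) by (left; apply Rpower_pos).
    apply Rmult_le_compat_r; [left; apply Rpower_pos|].
    eapply Rle_trans; [apply Rabs_triang|]. rewrite Rabs_Ropp, !Rabs_mult.
    assert (Rabs p * Rabs (cos (q * ln x + phi)) <= Rabs p * 1)
      by (apply Rmult_le_compat_l; [apply Rabs_pos | apply Rabs_le, COS_bound]).
    assert (Rabs q * Rabs (sin (q * ln x + phi)) <= Rabs q * 1)
      by (apply Rmult_le_compat_l; [apply Rabs_pos | apply Rabs_le, SIN_bound]).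
    lra.
Qed.

(* Pairing consecutive terms gives a series dominated by a telescoping one. *)
Lemma is_lim_seq_alternating_pairs (g : R -> R) p K :
  p < 0 -> 0 <= K ->
  (forall a b, 0 < a <= b -> Rabs (g b - g a) <= K * (Rpower a p - Rpower b p)) ->
  (forall x, 0 < x -> Rabs (g x) <= Rpower x p) ->
  is_lim_seq (sum_n (fun i => g (INR (2 * i + 1)) - g (INR (2 * i + 2))))
    (Series (fun k => (-1) ^ k * g (INR (k + 1)))).
Proof.
  intros Hp HK Hdiff Hbound.
  set (psi := fun k => g (INR (k + 1))).
  assert (Hpos : forall k, 0 < INR (k + 1)) by (intros; apply lt_0_INR; lia).
  assert (Hpair : forall i, g (INR (2 * i + 1)) - g (INR (2 * i + 2)) = psi (2 * i)%nat - psi (S (2 * i)))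
    by (intros i; unfold psi; do 3 f_equal; lia).
  assert (Hex : ex_series (fun i => psi (2 * i)%nat - psi (S (2 * i)))).
  { apply (ex_series_le (K := R_AbsRing) (V := R_CompleteNormedModule)
      _ (fun i => K * (Rpower (INR (2 * i + 1)) p - Rpower (INR (2 * S i + 1)) p))).
    - intros i. change (Rabs (psi (2 * i)%nat - psi (S (2 * i)))
        <= K * (Rpower (INR (2 * i + 1)) p - Rpower (INR (2 * S i + 1)) p)).
      unfold psi. rewrite Rabs_minus_sym.
      eapply Rle_trans; [apply Hdiff; split; [apply Hpos | apply le_INR; lia]|].
      apply Rmult_le_compat_l; [exact HK|].
      assert (Rpower (INR (2 * S i + 1)) p <= Rpower (INR (S (2 * i) + 1)) p)
        by (apply Rpower_le_Rpower_neg; [split; [apply Hpos | apply le_INR; lia] | lra]).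
      lra.
    - apply (ex_series_telescoping (fun i => Rpower (INR (2 * i + 1)) p)).
      apply is_lim_seq_Rpower_0; [exact Hp | intros; apply le_INR; lia | intros; apply Hpos]. }
  destruct Hex as [L HL].
  assert (Halt : is_lim_seq (sum_n (fun k => (-1) ^ k * g (INR (k + 1)))) L).
  { apply (is_lim_seq_alternating psi); [exact HL|].
    apply is_lim_seq_abs_0, (is_lim_seq_le_le (fun _ => 0) _ (fun k => Rpower (INR (k + 1)) p)).
    - intros k. split; [apply Rabs_pos | apply Hbound, Hpos].
    - apply is_lim_seq_const.
    - apply is_lim_seq_Rpower_0; [exact Hp | intros; apply le_INR; lia | intros; apply Hpos]. }
  unfold Series. rewrite (is_lim_seq_unique _ _ Halt).
  apply (is_lim_seq_ext (sum_n (fun i => psi (2 * i)%nat - psi (S (2 * i))))); [|exact HL].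
  intros n. apply sum_n_ext. intros i. symmetry. apply Hpair.
Qed.

Lemma is_lim_seq_alternating_cpow_phase p q phi : p < 0 ->
  is_lim_seq (sum_n (fun i => cpow_phase p q phi (INR (2 * i + 1)) - cpow_phase p q phi (INR (2 * i + 2))))
    (Series (fun k => (-1) ^ k * cpow_phase p q phi (INR (k + 1)))).
Proof.
  intros Hp. apply (is_lim_seq_alternating_pairs _ p ((Rabs p + Rabs q) / (- p))).
  - exact Hp.
  - apply Rdiv_le_0_compat; [pose proof (Rabs_pos p); pose proof (Rabs_pos q); lra | lra].
  - intros a b Hab. apply abs_cpow_phase_diff_le; assumption.
  - intros x _. apply abs_cpow_phase_le.
Qed.

Definition eta_pair (w : C) (i : nat) : C :=
  Cminus (cpow_pos (INR (2 * i + 1)) (Copp w)) (cpow_pos (INR (2 * i + 2)) (Copp w)).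

Lemma is_lim_seq_sum_eta_pair (pr : C -> R) phi w : 0 < Re w ->
  (forall x, pr (cpow_pos x (Copp w)) = cpow_phase (Re (Copp w)) (Im (Copp w)) phi x) ->
  (forall z z', pr (Cminus z z') = pr z - pr z') ->
  is_lim_seq (sum_n (fun i => pr (eta_pair w i)))
    (Series (fun k => (-1) ^ k * pr (cpow_pos (INR (k + 1)) (Copp w)))).
Proof.
  intros Hw Hpr Hminus.
  rewrite (Series_ext _ (fun k => (-1) ^ k * cpow_phase (Re (Copp w)) (Im (Copp w)) phi (INR (k + 1))))
    by (intros k; rewrite Hpr; reflexivity).
  apply (is_lim_seq_ext (sum_n (fun i =>
    cpow_phase (Re (Copp w)) (Im (Copp w)) phi (INR (2 * i + 1))
    - cpow_phase (Re (Copp w)) (Im (Copp w)) phi (INR (2 * i + 2))))).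
  { intros n. apply sum_n_ext. intros i. unfold eta_pair. rewrite Hminus, !Hpr. reflexivity. }
  apply is_lim_seq_alternating_cpow_phase. unfold Re in *. simpl. lra.
Qed.

Lemma filterlim_sumC_eta_pair w : 0 < Re w ->
  filterlim (fun N => sumC N (eta_pair w)) eventually (locally (eta_zeta w)).
Proof.
  intros Hw. apply (filterlim_C eventually). split.
  - change (is_lim_seq (fun N => Re (sumC N (eta_pair w))) (Re (eta_zeta w))).
    apply is_lim_seq_incr_1, (is_lim_seq_ext (sum_n (fun i => Re (eta_pair w i)))).
    + intros n. symmetry. apply Re_sumC.
    + apply (is_lim_seq_sum_eta_pair Re 0); [exact Hw | intros; apply Re_cpow_pos_phase | reflexivity].
  - change (is_lim_seq (fun N => Im (sumC N (eta_pair w))) (Im (eta_zeta w))).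
    apply is_lim_seq_incr_1, (is_lim_seq_ext (sum_n (fun i => Im (eta_pair w i)))).
    + intros n. symmetry. apply Im_sumC.
    + apply (is_lim_seq_sum_eta_pair Im (- (PI / 2))); [exact Hw | intros; apply Im_cpow_pos_phase | reflexivity].
Qed.

Lemma psd_mult_eta_gamma n A (s : nat -> C) :
  psd n A -> (forall j, (j < n)%nat -> 0 < Re (s j)) ->
  psd n (fun j k =>
    let w := Cplus (s j) (Cconj (s k)) in
    Cmult (A j k) (Cmult (eta_zeta w) (cGamma w))).
Proof.
  intros HA Hs.
  set (w := fun j k => Cplus (s j) (Cconj (s k))).
  apply (psd_lim eventually n (fun N j k =>
    sumC N (fun i => Cmult (A j k) (Cmult (eta_pair (w j k) i) (cGamma (w j k)))))).
  - exists O. intros N _.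
    apply (psd_sum n N (fun i j k => Cmult (A j k) (Cmult (eta_pair (w j k) i) (cGamma (w j k))))).
    intros i _. apply (psd_mult_laplace_diff n A s); [exact HA | exact Hs|].
    split; [apply lt_0_INR | apply lt_INR]; lia.
  - intros j k Hj Hk.
    apply (filterlim_ext (fun N => Cmult (A j k) (Cmult (sumC N (eta_pair (w j k))) (cGamma (w j k))))).
    { intros N. rewrite <- sumC_mult_r, <- sumC_mult_l. reflexivity. }
    apply (filterlim_Cmult eventually); [apply filterlim_const|].
    apply (filterlim_Cmult eventually); [|apply filterlim_const].
    apply filterlim_sumC_eta_pair, Re_Cplus_Cconj_pos; apply Hs; assumption.
Qed.

Theorem mainTheorem8 (m n : nat) (s : nat -> nat -> C)
  (hs : forall j l, (j < n)%nat -> (l < m)%nat -> 0 < Re (s j l)) :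
  psd n (fun j k =>
    prodC m (fun l =>
      let w := Cplus (s j l) (Cconj (s k l)) in
      Cmult (eta_zeta w) (cGamma w))).
Proof.
  induction m as [|m IH].
  - apply psd_1.
  - apply (psd_mult_eta_gamma n _ (fun j => s j m)).
    + apply IH. intros j l Hj Hl. apply hs; lia.
    + intros j Hj. apply hs; lia.
Qed.
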